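(* Let $\mathcal{M}=(M,\mathcal{C})$ be a $\beta$-model of MK$^*$ and let $(M_0,R)$ be a coding pair in $\mathcal{M}$. Then the quotient structure $(\tilde M_0,\tilde R)$ is extensional and well-founded.
   Context: MK$^*$ is Morse–Kelley class theory (two-sorted: sets and classes; models $(M,\mathcal{C})$ with $M$ a transitive ZFC model, $\mathcal{C}\subseteq\mathcal{P}(M)$; axioms include Class Comprehension for all two-sorted formulas and Global Choice, a class well-ordering of $M$) plus Class-Bounding $\forall x\,\exists A\,\varphi(x,A)\to\exists B\,\forall x\,\exists y\,\varphi(x,(B)_y)$, $(B)_y=\{z:(y,z)\in B\}$. A $\beta$-model: classes are well-founded in the model iff truly well-founded. A coding pair is $(M_0,R)$ with $M_0\in\mathcal{C}$ having a distinguished element $a$ and $R\in\mathcal{C}$ a binary relation on $M_0$ such that: (a) each $z\in M_0$ has a unique $n$ such that there is an $R$-chain $zRz_{n-1}R\cdots Rz_1Ra$; (b) if $y\neq z$, $yRx$, $zRx$ then $(M_0,R)\restriction y\not\cong(M_0,R)\restriction z$, where $(M_0,R)\restriction y$ is $y$ together with all elements connected to $y$ by an $R$-chain, with $R$ restricted; (c) if $y\neq z$ have the same $R$-distance from $a$ then $vRy\to\neg(vRz)$; (d) $R$ is well-founded. The quotient: for $b\in M_0$ let $[b]=\{b'\in M_0:(M_0,R)\restriction b'\cong(M_0,R)\restriction b\}$, let $\tilde b$ be a representative of $[b]$ chosen via the global well-order, $\tilde M_0=\{\tilde b:b\in M_0\}$, and $\tilde b\,\tilde R\,\tilde c$ iff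 there exist $b_0\in[b]$, $c_0\in[c]$ with $b_0Rc_0$. *)

(* The set sort is a type [M] with a membership relation [mem]; classes are
   predicates [M -> Prop]; the class sort of the model is [C : (M -> Prop) -> Prop]. *)
From Stdlib Require Import Arith.

Section MK.
Variable M : Type.
Variable mem : M -> M -> Prop.
Variable C : (M -> Prop) -> Prop.

Definition is_empty (e : M) : Prop := forall u, ~ mem u e.
Definition is_upair (w y z : M) : Prop := forall u, mem u w <-> (u = y \/ u = z).
Definition is_pair (p y z : M) : Prop :=
  forall w, mem w p <-> (is_upair w y y \/ is_upair w y z).
Definition crel (X : M -> Prop) (y z : M) : Prop := exists p, is_pair p y z /\ X p.
Definition section (B : M -> Prop) (y : M) : M -> Prop := fun z => crel B y z.

(** ** Two-sorted formulas (de Bruijn indices; set variables and class variables) *)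
Inductive fm : Type :=
| FMem  : nat -> nat -> fm
| FEq   : nat -> nat -> fm
| FIn   : nat -> nat -> fm
| FNeg  : fm -> fm
| FAnd  : fm -> fm -> fm
| FAllS : fm -> fm
| FAllC : fm -> fm.

Definition scons {A : Type} (a : A) (e : nat -> A) : nat -> A :=
  fun n => match n with 0 => a | S k => e k end.

Fixpoint sat (e : nat -> M) (E : nat -> (M -> Prop)) (f : fm) : Prop :=
  match f with
  | FMem i j => mem (e i) (e j)
  | FEq i j => e i = e j
  | FIn i k => E k (e i)
  | FNeg g => ~ sat e E g
  | FAnd g h => sat e E g /\ sat e E h
  | FAllS g => forall x : M, sat (scons x e) E g
  | FAllC g => forall X : M -> Prop, C X -> sat e (scons X E) g
  end.

Definition model_wf (X : M -> Prop) : Prop :=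
  forall Y : M -> Prop, C Y -> (exists x, Y x) ->
    exists x, Y x /\ forall y, Y y -> ~ crel X y x.

Definition global_wo (W : M -> Prop) : Prop :=
  C W /\
  (forall x, ~ crel W x x) /\
  (forall x y z, crel W x y -> crel W y z -> crel W x z) /\
  (forall x y, crel W x y \/ x = y \/ crel W y x) /\
  model_wf W.

Definition MKstar : Prop :=
  (* M is (isomorphic to) a transitive model: membership is extensional and well-founded *)
  (forall x y, (forall z, mem z x <-> mem z y) -> x = y) /\
  well_founded mem /\
  (* every class is a subclass of M: automatic (C ⊆ P(M)) *)
  (exists e, is_empty e) /\
  (forall y z, exists w, is_upair w y z) /\
  (forall x, exists u, forall z, mem z u <-> exists w, mem w x /\ mem z w) /\
  (forall x, exists p, forall z, mem z p <-> forall w, mem w z -> mem w x) /\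
  (exists x, (exists e, is_empty e /\ mem e x) /\
     forall u, mem u x -> exists s, mem s x /\ forall w, mem w s <-> (mem w u \/ w = u)) /\
  (forall A, C A -> forall x, exists y, forall z, mem z y <-> (mem z x /\ A z)) /\
  (forall F, C F -> (forall u v v', crel F u v -> crel F u v' -> v = v') ->
     forall x, exists y, forall w, mem w y <-> exists v, mem v x /\ crel F v w) /\
  (forall (f : fm) (e : nat -> M) (E : nat -> (M -> Prop)),
     (forall k, C (E k)) -> C (fun x => sat (scons x e) E f)) /\
  (exists W, global_wo W) /\
  (* Class-Bounding: ∀x ∃A φ(x,A) → ∃B ∀x ∃y φ(x,(B)_y)  (x = set var 0, A = class var 0) *)
  (forall (f : fm) (e : nat -> M) (E : nat -> (M -> Prop)),
     (forall k, C (E k)) ->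
     (forall x, exists A, C A /\ sat (scons x e) (scons A E) f) ->
     exists B, C B /\ forall x, exists y, sat (scons x e) (scons (section B y) E) f).

Definition beta_model : Prop :=
  forall X, C X -> (model_wf X <-> well_founded (crel X)).

Section Coding.
Variables (M0 : M -> Prop) (a : M) (R : M -> Prop).

Definition rR (y x : M) : Prop := crel R y x.

Fixpoint chain (n : nat) (z w : M) : Prop :=
  match n with
  | 0 => z = w
  | S k => exists z', rR z z' /\ chain k z' w
  end.

Definition below (y : M) : M -> Prop := fun v => exists n, chain n v y.

Definition restr_iso (y z : M) : Prop :=
  exists F, C F /\
    (forall u v, crel F u v -> below y u /\ below z v) /\
    (forall u, below y u -> exists v, crel F u v /\ forall v', crel F u v' -> v' = v) /\
    (forall v, below z v -> exists u, crel F u v /\ forall u', crel F u' v -> u' = u) /\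
    (forall u u' v v', crel F u v -> crel F u' v' -> (rR u u' <-> rR v v')).

Definition coding_pair : Prop :=
  C M0 /\ M0 a /\ C R /\
  (forall p, R p -> exists y x, is_pair p y x /\ M0 y /\ M0 x) /\
  (forall z, M0 z -> exists n, chain n z a /\ forall m, chain m z a -> m = n) /\
  (forall x y z, y <> z -> rR y x -> rR z x -> ~ restr_iso y z) /\
  (forall y z n, M0 y -> M0 z -> y <> z -> chain n y a -> chain n z a ->
     forall v, rR v y -> ~ rR v z) /\
  model_wf R.

Definition cls (b : M) : M -> Prop := fun b' => M0 b' /\ restr_iso b' b.

Definition is_rep (W : M -> Prop) (b r : M) : Prop :=
  cls b r /\ forall r', cls b r' -> r' = r \/ crel W r r'.

Definition tM0 (W : M -> Prop) : M -> Prop := fun x => exists b, M0 b /\ is_rep W b x.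

Definition tR (W : M -> Prop) (x y : M) : Prop :=
  exists b c, M0 b /\ M0 c /\ is_rep W b x /\ is_rep W c y /\
    exists b0 c0, cls b b0 /\ cls c c0 /\ rR b0 c0.

Definition extensional (D : M -> Prop) (Q : M -> M -> Prop) : Prop :=
  forall x y, D x -> D y -> (forall v, D v -> (Q v x <-> Q v y)) -> x = y.

Definition wf_on (D : M -> Prop) (Q : M -> M -> Prop) : Prop :=
  well_founded (fun u v => D u /\ D v /\ Q u v).

End Coding.
End MK.

Arguments MKstar {M}.
Arguments beta_model {M}.
Arguments global_wo {M}.
Arguments coding_pair {M}.
Arguments tM0 {M}.
Arguments tR {M}.
Arguments extensional {M}.
Arguments wf_on {M}.

(* In a beta-model the class relation R is truly well-founded.  An R-edge between two quotient
   elements lifts, through an isomorphism of restrictions, to an R-edge below any isomorphic copy,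
   so a descending sequence in the quotient yields a descending R-sequence: the quotient is
   well-founded.  For extensionality, if representatives x and y have the same quotient
   predecessors, every child of x is isomorphic to a child of y and conversely.  Axiom (b) makes
   isomorphisms between restrictions unique and axiom (c) makes the subtrees of distinct children
   disjoint, so these isomorphisms, together with x |-> y, glue to a class isomorphism of the
   restrictions at x and y; being W-least in the same class, x and y coincide. *)
From Pilot Require Import Defs.
From Stdlib Require Import Classical FunctionalExtensionality PropExtensionality Setoid Lia.

Section Model.
Variable M : Type.
Variable mem : M -> M -> Prop.
Variable C : (M -> Prop) -> Prop.

Notation sat := (sat M mem C).
Notation crel := (crel M mem).
Notation is_pair := (is_pair M mem).
Notation is_upair := (is_upair M mem).

(** * Formulas and their satisfaction *)

Definition FOr f g := FNeg (FAnd (FNeg f) (FNeg g)).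
Definition FImp f g := FNeg (FAnd f (FNeg g)).
Definition FIff f g := FAnd (FImp f g) (FImp g f).
Definition FExS f := FNeg (FAllS (FNeg f)).
Definition FExC f := FNeg (FAllC (FNeg f)).

Lemma sat_FOr e E f g : sat e E (FOr f g) <-> sat e E f \/ sat e E g.
Proof. cbn; tauto. Qed.

Lemma sat_FImp e E f g : sat e E (FImp f g) <-> (sat e E f -> sat e E g).
Proof. cbn; tauto. Qed.

Lemma sat_FIff e E f g : sat e E (FIff f g) <-> (sat e E f <-> sat e E g).
Proof. cbn; tauto. Qed.

Lemma sat_FExS e E f : sat e E (FExS f) <-> exists x, sat (scons x e) E f.
Proof. cbn; split; [apply not_all_not_ex | intros [x Hx] H; exact (H x Hx)]. Qed.

Lemma sat_FExC e E f : sat e E (FExC f) <-> exists X, C X /\ sat e (scons X E) f.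
Proof.
  cbn; split.
  - intro H; apply NNPP; intro H'; apply H; intros X CX HX; apply H'; eauto.
  - intros [X [CX HX]] H; exact (H X CX HX).
Qed.

Create HintDb sat.
#[local] Hint Rewrite sat_FOr sat_FImp sat_FIff sat_FExS sat_FExC : sat.

Ltac satsimp :=
  repeat (progress cbn [Defs.sat scons] in * || rewrite_strat (topdown (hints sat))).

Definition fupair i j k := FAllS (FIff (FMem 0 (S i)) (FOr (FEq 0 (S j)) (FEq 0 (S k)))).

Lemma sat_fupair e E i j k : sat e E (fupair i j k) <-> is_upair (e i) (e j) (e k).
Proof. unfold fupair, is_upair; satsimp; reflexivity. Qed.
#[local] Hint Rewrite sat_fupair : sat.

Definition fpair i j k :=
  FAllS (FIff (FMem 0 (S i)) (FOr (fupair 0 (S j) (S j)) (fupair 0 (S j) (S k)))).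

Lemma sat_fpair e E i j k : sat e E (fpair i j k) <-> is_pair (e i) (e j) (e k).
Proof. unfold fpair, is_pair; satsimp; reflexivity. Qed.
#[local] Hint Rewrite sat_fpair : sat.

Definition fcrel k i j := FExS (FAnd (fpair 0 (S i) (S j)) (FIn 0 k)).

Lemma sat_fcrel e E k i j : sat e E (fcrel k i j) <-> crel (E k) (e i) (e j).
Proof. unfold fcrel, Defs.crel; satsimp; reflexivity. Qed.
#[local] Hint Rewrite sat_fcrel : sat.

(* [below y] is given by finite chains, which no formula can quantify over; this second-order
   closure is its definable replacement (see [below_iff_closure]). *)
Definition in_pred_closure (Q : M -> Prop) (v y : M) : Prop :=
  forall X, C X -> X y -> (forall u w, X w -> crel Q u w -> X u) -> X v.

Definition fclosure r i j :=
  FAllC (FImp (FIn j 0) (FImp (FAllS (FAllS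
    (FImp (FAnd (FIn 0 0) (fcrel (S r) 1 0)) (FIn 1 0)))) (FIn i 0))).

Lemma sat_fclosure e E r i j :
  sat e E (fclosure r i j) <-> in_pred_closure (E r) (e i) (e j).
Proof.
  unfold fclosure, in_pred_closure; satsimp.
  split; intros H X CX Xy Hcl; apply H; auto.
  - intros u w [Xw Huw]; eauto.
  - intros u w Xw Huw; eauto.
Qed.
#[local] Hint Rewrite sat_fclosure : sat.

(** * Ordered pairs and relations coded by classes *)

Section SetTheory.
Hypothesis mem_ext : forall x y, (forall z, mem z x <-> mem z y) -> x = y.
Hypothesis upair_exists : forall y z, exists w, is_upair w y z.
Hypothesis comprehension : forall f e E,
  (forall k, C (E k)) -> C (fun x => sat (scons x e) E f).

Lemma C_of_sat f e E (P : M -> Prop) :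
  (forall k, C (E k)) -> (forall x, sat (scons x e) E f <-> P x) -> C P.
Proof.
  intros CE HP. replace P with (fun x => sat (scons x e) E f); [now apply comprehension|].
  apply functional_extensionality; intro x; apply propositional_extensionality; auto.
Qed.

Lemma pair_exists y z : exists p, is_pair p y z.
Proof.
  destruct (upair_exists y y) as [w1 H1], (upair_exists y z) as [w2 H2].
  destruct (upair_exists w1 w2) as [p Hp]. exists p; intro w; rewrite (Hp w). split.
  - intros [-> | ->]; auto.
  - intros [Hw | Hw]; [left | right]; apply mem_ext; intro u;
      [rewrite (Hw u), (H1 u) | rewrite (Hw u), (H2 u)]; tauto.
Qed.

Lemma pair_inj p y z y' z' : is_pair p y z -> is_pair p y' z' -> y = y' /\ z = z'.
Proof.
  intros Hp Hp'.
  destruct (upair_exists y y) as [w1 H1].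
  assert (Hy : y' = y).
  { assert (Hw1 : mem w1 p) by (apply Hp; auto).
    apply Hp' in Hw1 as [Hw | Hw]; assert (Hy' : mem y' w1) by (apply Hw; auto);
      apply H1 in Hy'; tauto. }
  subst y'; split; [reflexivity|].
  destruct (upair_exists y z) as [w2 H2], (upair_exists y z') as [w3 H3].
  assert (A2 : mem w2 p) by (apply Hp; auto).
  assert (A3 : mem w3 p) by (apply Hp'; auto).
  apply Hp' in A2; apply Hp in A3.
  assert (Z2 : mem z w2) by (apply H2; auto).
  assert (Z3 : mem z' w3) by (apply H3; auto).
  destruct A2 as [A2 | A2]; apply A2 in Z2;
  destruct A3 as [A3 | A3]; apply A3 in Z3; intuition congruence.
Qed.

Definition rel_class (P : M -> M -> Prop) : M -> Prop :=
  fun p => exists u v, is_pair p u v /\ P u v.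

Lemma crel_rel_class P x y : crel (rel_class P) x y <-> P x y.
Proof.
  unfold Defs.crel, rel_class; split.
  - intros (p & Hp & u & v & Hp' & HP).
    now destruct (pair_inj _ _ _ _ _ Hp Hp') as [-> ->].
  - intro H; destruct (pair_exists x y) as [p Hp]; exists p; split; eauto.
Qed.

Lemma C_rel_class f e E (P : M -> M -> Prop) : (forall k, C (E k)) ->
  (forall p u v, sat (scons v (scons u (scons p e))) E f <-> P u v) -> C (rel_class P).
Proof.
  intros CE HP.
  apply (C_of_sat (FExS (FExS (FAnd (fpair 2 1 0) f))) e E); auto.
  intro p; unfold rel_class; satsimp; setoid_rewrite HP; reflexivity.
Qed.


(** * Chains in a coding pair *)

Section CodingPair.
Variables (M0 : M -> Prop) (a : M) (R : M -> Prop).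
Hypothesis Hcp : coding_pair mem C M0 a R.
Hypothesis R_wf : well_founded (crel R).

Notation rR := (Defs.rR M mem R).
Notation chain := (Defs.chain M mem R).
Notation below := (Defs.below M mem R).
Notation restr_iso := (Defs.restr_iso M mem C R).

Lemma C_M0 : C M0. Proof. apply Hcp. Qed.
Lemma C_R : C R. Proof. apply Hcp. Qed.

Lemma rR_M0 y x : rR y x -> M0 y /\ M0 x.
Proof.
  intros (p & Hp & Rp). destruct Hcp as (_ & _ & _ & Hfield & _).
  destruct (Hfield p Rp) as (y' & x' & Hp' & My & Mx).
  now destruct (pair_inj _ _ _ _ _ Hp Hp') as [-> ->].
Qed.

Lemma chain_app n m u v w : chain n u v -> chain m v w -> chain (n + m) u w.
Proof.
  revert u; induction n as [|n IH]; intros u H1 H2; cbn in *.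
  - now subst.
  - destruct H1 as (z & Hz & H1); eauto.
Qed.

Lemma chain_M0 n v y : chain n v y -> M0 y -> M0 v.
Proof.
  destruct n as [|n]; cbn; [now intros -> |].
  intros (z & Hz & _) _; apply (rR_M0 _ _ Hz).
Qed.

Lemma below_refl y : below y y.
Proof. now exists 0. Qed.

Lemma below_trans x y z : below y x -> below z y -> below z x.
Proof. intros [n Hn] [m Hm]; exists (n + m); eapply chain_app; eauto. Qed.

Lemma below_step u v : rR u v -> below v u.
Proof. intro H; exists 1; cbn; eauto. Qed.

Lemma below_inv y u : below y u -> u = y \/ exists c, rR c y /\ below c u.
Proof.
  intros [n Hn]; revert u Hn; induction n as [|n IH]; intros u Hn; cbn in Hn; auto.
  destruct Hn as (z & Huz & Hn); right.
  destruct (IH z Hn) as [-> | (c & Hcy & Hcz)].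
  - exists u; split; [exact Huz | apply below_refl].
  - exists c; split; [exact Hcy | apply (below_trans u z c); [now apply below_step | exact Hcz]].
Qed.

Lemma below_acyclic u v : below u v -> rR u v -> False.
Proof.
  revert v; induction u as [u IH] using (well_founded_ind R_wf); intros v Huv Ruv.
  destruct (below_inv u v Huv) as [-> | (c & Rcu & Hcv)].
  - exact (IH u Ruv u (below_refl u) Ruv).
  - apply (IH c Rcu u); [apply (below_trans u v c); [now apply below_step | exact Hcv] | exact Rcu].
Qed.

Lemma dist_unique v m n : M0 v -> chain m v a -> chain n v a -> m = n.
Proof.
  intros Mv Hm Hn. destruct Hcp as (_ & _ & _ & _ & Hdist & _).
  destruct (Hdist v Mv) as (d & _ & Hd). now rewrite (Hd m Hm), (Hd n Hn).
Qed.

Lemma dist_step v w k : rR v w -> chain k v a -> exists k', k = S k' /\ chain k' w a.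
Proof.
  intros Rvw Hk. destruct (rR_M0 _ _ Rvw) as [Mv Mw].
  destruct Hcp as (_ & _ & _ & _ & Hdist & _). destruct (Hdist w Mw) as (d & Hd & _).
  exists d; split; [|exact Hd]. apply (dist_unique v); cbn; eauto.
Qed.

Lemma same_dist_eq n v p q k : M0 v -> chain n v p -> chain n v q ->
  chain k p a -> chain k q a -> p = q.
Proof.
  revert v; induction n as [|n IH]; intros v Mv Hp Hq Hkp Hkq; cbn in *; [congruence|].
  destruct Hp as (v1 & R1 & Hp), Hq as (v2 & R2 & Hq).
  destruct (classic (v1 = v2)) as [<- | Hne]; [exact (IH v1 (proj2 (rR_M0 _ _ R1)) Hp Hq Hkp Hkq)|].
  destruct Hcp as (_ & _ & _ & _ & _ & _ & Hc & _). exfalso.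
  apply (Hc v1 v2 (n + k) (proj2 (rR_M0 _ _ R1)) (proj2 (rR_M0 _ _ R2)) Hne
    (chain_app _ _ _ _ _ Hp Hkp) (chain_app _ _ _ _ _ Hq Hkq) v R1 R2).
Qed.

Lemma below_children_disjoint u1 u2 x v :
  rR u1 x -> rR u2 x -> below u1 v -> below u2 v -> u1 = u2.
Proof.
  intros R1 R2 [n Hn] [m Hm].
  destruct (rR_M0 _ _ R1) as [M1 Mx]. destruct Hcp as (_ & _ & _ & _ & Hdist & _).
  destruct (Hdist x Mx) as (k & Hk & _).
  assert (K1 : chain (S k) u1 a) by (cbn; eauto).
  assert (K2 : chain (S k) u2 a) by (cbn; eauto).
  assert (Mv : M0 v) by exact (chain_M0 _ _ _ Hn M1).
  assert (n = m) as <-.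
  { enough (n + S k = m + S k) by lia.
    apply (dist_unique v _ _ Mv); eapply chain_app; eauto. }
  eapply same_dist_eq; eauto.
Qed.

Lemma in_closure_inv v y : in_pred_closure R v y ->
  v = y \/ exists w, rR v w /\ in_pred_closure R w y.
Proof.
  set (D := fun v => v = y \/ exists w, rR v w /\ in_pred_closure R w y).
  assert (CD : C D).
  { apply (C_of_sat (FOr (FEq 0 1) (FExS (FAnd (fcrel 0 1 0) (fclosure 0 0 2))))
             (fun _ => y) (fun _ => R)); [intros; apply C_R|].
    intro x; satsimp; reflexivity. }
  intro Hv; apply (Hv D CD); [now left|].
  intros u w Dw Ruw; right; exists w; split; [exact Ruw|].
  intros X CX Xy Xcl. destruct Dw as [-> | (w' & Rww' & Hw')]; [exact Xy|].
  apply (Xcl w w'); [now apply Hw' | exact Rww'].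
Qed.

(* Descending from [v] towards [y] inside the closure must stop: each step lowers the distance to [a]. *)
Lemma below_of_closure_dist k v y : chain k v a -> in_pred_closure R v y -> below y v.
Proof.
  revert v; induction k as [|k IH]; intros v Hk Hv;
    destruct (in_closure_inv v y Hv) as [-> | (w & Rvw & Hw)]; try apply below_refl;
    destruct (dist_step v w _ Rvw Hk) as (k' & Ek & Hk'); try discriminate.
  injection Ek as <-. apply (below_trans v w y); [now apply below_step | now apply IH].
Qed.

Lemma below_iff_closure y v : below y v <-> in_pred_closure R v y.
Proof.
  split.
  - intros [n Hn] X CX Xy Xcl; revert v Hn; induction n as [|n IH]; intros v Hn; cbn in Hn.
    + now subst.
    + destruct Hn as (z & Rvz & Hn); apply (Xcl v z); [now apply IH | exact Rvz].
  - intro Hv. destruct (in_closure_inv v y Hv) as [-> | (w & Rvw & _)]; [apply below_refl|].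
    destruct Hcp as (_ & _ & _ & _ & Hdist & _).
    destruct (Hdist v (proj1 (rR_M0 _ _ Rvw))) as (k & Hk & _).
    exact (below_of_closure_dist k v y Hk Hv).
Qed.

(** * Isomorphisms of restrictions *)

Definition iso (F : M -> Prop) (y z : M) : Prop :=
  (forall u v, crel F u v -> below y u /\ below z v) /\
  (forall u, below y u -> exists v, crel F u v /\ forall v', crel F u v' -> v' = v) /\
  (forall v, below z v -> exists u, crel F u v /\ forall u', crel F u' v -> u' = u) /\
  (forall u u' v v', crel F u v -> crel F u' v' -> (rR u u' <-> rR v v')).

Definition fiso r k i j :=
  FAnd (FAllS (FAllS (FImp (fcrel k 1 0)
         (FAnd (fclosure r 1 (S (S i))) (fclosure r 0 (S (S j)))))))
 (FAnd (FAllS (FImp (fclosure r 0 (S i))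
         (FExS (FAnd (fcrel k 1 0) (FAllS (FImp (fcrel k 2 0) (FEq 0 1)))))))
 (FAnd (FAllS (FImp (fclosure r 0 (S j))
         (FExS (FAnd (fcrel k 0 1) (FAllS (FImp (fcrel k 0 2) (FEq 0 1)))))))
   (FAllS (FAllS (FAllS (FAllS
     (FImp (fcrel k 3 1) (FImp (fcrel k 2 0) (FIff (fcrel r 3 2) (fcrel r 1 0)))))))))).

Lemma sat_fiso e E r k i j : E r = R -> (sat e E (fiso r k i j) <-> iso (E k) (e i) (e j)).
Proof.
  intro ER; unfold fiso, iso; satsimp.
  setoid_rewrite ER; setoid_rewrite <- below_iff_closure; reflexivity.
Qed.

Definition frestr r i j := FExC (fiso (S r) 0 i j).

Lemma sat_frestr e E r i j : E r = R -> (sat e E (frestr r i j) <-> restr_iso (e i) (e j)).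
Proof.
  intro ER; unfold frestr; rewrite sat_FExC.
  split; intros (F & CF & HF); exists F; split; auto;
    revert HF; apply (sat_fiso e (scons F E) (S r) 0 i j ER).
Qed.

Section IsoFacts.
Variables (F : M -> Prop) (y z : M).
Hypothesis HF : iso F y z.

Lemma iso_dom u v : crel F u v -> below y u /\ below z v.
Proof. apply HF. Qed.

Lemma iso_total u : below y u -> exists v, crel F u v.
Proof. intro Hu; destruct HF as (_ & Htot & _); destruct (Htot u Hu) as (v & ? & _); eauto. Qed.

Lemma iso_surj v : below z v -> exists u, crel F u v.
Proof. intro Hv; destruct HF as (_ & _ & Hsur & _); destruct (Hsur v Hv) as (u & ? & _); eauto. Qed.

Lemma iso_functional u v v' : crel F u v -> crel F u v' -> v = v'.
Proof.
  intros Hv Hv'; destruct HF as (Hdom & Htot & _).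
  destruct (Htot u (proj1 (Hdom _ _ Hv))) as (w & _ & Hw).
  now rewrite (Hw v Hv), (Hw v' Hv').
Qed.

Lemma iso_injective u u' v : crel F u v -> crel F u' v -> u = u'.
Proof.
  intros Hu Hu'; destruct HF as (Hdom & _ & Hsur & _).
  destruct (Hsur v (proj2 (Hdom _ _ Hu))) as (w & _ & Hw).
  now rewrite (Hw u Hu), (Hw u' Hu').
Qed.

Lemma iso_pres u u' v v' : crel F u v -> crel F u' v' -> (rR u u' <-> rR v v').
Proof. apply HF. Qed.

Lemma iso_root : crel F y z.
Proof.
  destruct (iso_total y (below_refl y)) as [v Hv].
  destruct (iso_dom _ _ Hv) as [_ [[|n] Hn]]; cbn in Hn; [now subst|].
  destruct Hn as (v1 & Rvv1 & Hn). destruct (iso_surj v1) as [u1 Hu1]; [now exists n|].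
  apply (iso_pres _ _ _ _ Hv Hu1) in Rvv1.
  exfalso; exact (below_acyclic y u1 (proj1 (iso_dom _ _ Hu1)) Rvv1).
Qed.

Lemma iso_below s t u v : crel F s t -> crel F u v -> below s u -> below t v.
Proof.
  intros Hst Huv [n Hn]; revert u v Huv Hn; induction n as [|n IH]; intros u v Huv Hn; cbn in Hn.
  - subst u; rewrite (iso_functional _ _ _ Huv Hst); apply below_refl.
  - destruct Hn as (w & Ruw & Hn).
    assert (Hw : below y w) by (apply (below_trans w s y); [now exists n | apply (iso_dom _ _ Hst)]).
    destruct (iso_total w Hw) as [w' Hw'].
    apply (below_trans v w' t); [apply below_step | exact (IH w w' Hw' Hn)].
    exact (proj1 (iso_pres _ _ _ _ Huv Hw') Ruw).
Qed.

End IsoFacts.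

Definition inv_rel F := rel_class (fun u v => crel F v u).
Definition restrict_rel F s := rel_class (fun u v => below s u /\ crel F u v).
Definition comp_rel F G := rel_class (fun u w => exists v, crel F u v /\ crel G v w).
Definition id_rel y := rel_class (fun u v => u = v /\ below y u).

Lemma iso_inv F y z : iso F y z -> iso (inv_rel F) z y.
Proof.
  intro HF; unfold inv_rel, iso; setoid_rewrite crel_rel_class.
  split; [|split; [|split]].
  - intros u v H; destruct (iso_dom _ _ _ HF _ _ H); auto.
  - intros u Hu; destruct (iso_surj _ _ _ HF u Hu) as [v Hv]; exists v; split; auto.
    intros v' Hv'; exact (iso_injective _ _ _ HF _ _ _ Hv' Hv).
  - intros v Hv; destruct (iso_total _ _ _ HF v Hv) as [u Hu]; exists u; split; auto.
    intros u' Hu'; exact (iso_functional _ _ _ HF _ _ _ Hu' Hu).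
  - intros u u' v v' H H'; symmetry; exact (iso_pres _ _ _ HF _ _ _ _ H H').
Qed.

Lemma iso_restrict F y z s t : iso F y z -> below y s -> crel F s t -> iso (restrict_rel F s) s t.
Proof.
  intros HF Hs Hst; unfold restrict_rel, iso; setoid_rewrite crel_rel_class.
  assert (HF' := iso_inv _ _ _ HF).
  assert (Hts : crel (inv_rel F) t s) by (unfold inv_rel; now rewrite crel_rel_class).
  split; [|split; [|split]].
  - intros u v [Hu Huv]; split; [exact Hu | exact (iso_below _ _ _ HF _ _ _ _ Hst Huv Hu)].
  - intros u Hu; destruct (iso_total _ _ _ HF u (below_trans _ _ _ Hu Hs)) as [v Hv].
    exists v; split; auto; intros v' [_ Hv']; exact (iso_functional _ _ _ HF _ _ _ Hv' Hv).
  - intros v Hv. destruct (iso_total _ _ _ HF' v) as [u Hu].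
    { exact (below_trans _ _ _ Hv (proj2 (iso_dom _ _ _ HF _ _ Hst))). }
    assert (Hu' := iso_below _ _ _ HF' _ _ _ _ Hts Hu Hv).
    unfold inv_rel in Hu; rewrite crel_rel_class in Hu.
    exists u; split; auto; intros u' [_ Hu'v]; exact (iso_injective _ _ _ HF _ _ _ Hu'v Hu).
  - intros u u' v v' [_ H] [_ H']; exact (iso_pres _ _ _ HF _ _ _ _ H H').
Qed.

Lemma iso_comp F G x y z : iso F x y -> iso G y z -> iso (comp_rel F G) x z.
Proof.
  intros HF HG; unfold comp_rel, iso; setoid_rewrite crel_rel_class.
  split; [|split; [|split]].
  - intros u w (v & H1 & H2);
      split; [exact (proj1 (iso_dom _ _ _ HF _ _ H1)) | exact (proj2 (iso_dom _ _ _ HG _ _ H2))].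
  - intros u Hu; destruct (iso_total _ _ _ HF u Hu) as [v Hv].
    destruct (iso_total _ _ _ HG v (proj2 (iso_dom _ _ _ HF _ _ Hv))) as [w Hw].
    exists w; split; eauto; intros w' (v' & H1 & H2).
    rewrite <- (iso_functional _ _ _ HF _ _ _ Hv H1) in H2; exact (iso_functional _ _ _ HG _ _ _ H2 Hw).
  - intros w Hw; destruct (iso_surj _ _ _ HG w Hw) as [v Hv].
    destruct (iso_surj _ _ _ HF v (proj1 (iso_dom _ _ _ HG _ _ Hv))) as [u Hu].
    exists u; split; eauto; intros u' (v' & H1 & H2).
    rewrite <- (iso_injective _ _ _ HG _ _ _ Hv H2) in H1; exact (iso_injective _ _ _ HF _ _ _ H1 Hu).
  - intros u u' w w' (v & H1 & H2) (v' & H1' & H2').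
    rewrite (iso_pres _ _ _ HF _ _ _ _ H1 H1'); exact (iso_pres _ _ _ HG _ _ _ _ H2 H2').
Qed.

Lemma iso_id y : iso (id_rel y) y y.
Proof.
  unfold id_rel, iso; setoid_rewrite crel_rel_class; split; [|split; [|split]].
  - intros u v [<- H]; auto.
  - intros u Hu; exists u; split; auto; intros v' [<- _]; auto.
  - intros u Hu; exists u; split; auto; intros v' [-> _]; auto.
  - intros u u' v v' [<- _] [<- _]; tauto.
Qed.

Lemma C_inv_rel F : C F -> C (inv_rel F).
Proof.
  intro CF; apply (C_rel_class (fcrel 0 0 1) (fun _ => a) (fun _ => F)); auto.
  intros p u v; satsimp; reflexivity.
Qed.

Lemma C_comp_rel F G : C F -> C G -> C (comp_rel F G).
Proof.
  intros CF CG.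
  apply (C_rel_class (FExS (FAnd (fcrel 0 2 0) (fcrel 1 0 1))) (fun _ => a) (scons F (fun _ => G))).
  - intros [|k]; auto.
  - intros p u v; satsimp; reflexivity.
Qed.

Lemma C_restrict_rel F s : C F -> C (restrict_rel F s).
Proof.
  intro CF.
  apply (C_rel_class (FAnd (fclosure 1 1 3) (fcrel 0 1 0)) (fun _ => s) (scons F (fun _ => R))).
  - intros [|k]; [exact CF | apply C_R].
  - intros p u v; satsimp; rewrite <- below_iff_closure; reflexivity.
Qed.

Lemma C_id_rel y : C (id_rel y).
Proof.
  apply (C_rel_class (FAnd (FEq 1 0) (fclosure 0 1 3)) (fun _ => y) (fun _ => R)).
  - intros; apply C_R.
  - intros p u v; satsimp; rewrite <- below_iff_closure; reflexivity.
Qed.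

#[local] Instance restr_iso_equiv : Equivalence restr_iso.
Proof.
  split.
  - intro y; exists (id_rel y); split; [apply C_id_rel | apply iso_id].
  - intros y z (F & CF & HF); exists (inv_rel F); split; [now apply C_inv_rel | now apply iso_inv].
  - intros x y z (F & CF & HF) (G & CG & HG); exists (comp_rel F G).
    split; [now apply C_comp_rel | eapply iso_comp; eauto].
Qed.

Lemma restr_iso_sub F y z s t : C F -> iso F y z -> below y s -> crel F s t -> restr_iso s t.
Proof.
  intros CF HF Hs Hst; exists (restrict_rel F s).
  split; [now apply C_restrict_rel | eapply iso_restrict; eauto].
Qed.

Lemma restr_iso_child y z u : restr_iso y z -> rR u y -> exists v, rR v z /\ restr_iso u v.
Proof.
  intros (F & CF & HF) Ruy.
  destruct (iso_total _ _ _ HF u (below_step _ _ Ruy)) as [v Hv]; exists v; split.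
  - exact (proj1 (iso_pres _ _ _ HF _ _ _ _ Hv (iso_root _ _ _ HF)) Ruy).
  - exact (restr_iso_sub F y z u v CF HF (below_step _ _ Ruy) Hv).
Qed.

(* Axiom (b) forbids two isomorphic siblings, so isomorphisms between subtrees are unique. *)
Lemma iso_rigid F G y z : C F -> C G -> iso F y z -> iso G y z ->
  forall s t, crel F s t -> crel G s t.
Proof.
  intros CF CG HF HG s t Hst.
  destruct (iso_dom _ _ _ HF _ _ Hst) as [[n Hn] _].
  revert s t Hst Hn; induction n as [|n IH]; intros s t Hst Hn; cbn in Hn.
  - subst s; rewrite (iso_functional _ _ _ HF _ _ _ Hst (iso_root _ _ _ HF)); apply iso_root, HG.
  - destruct Hn as (s1 & Rss1 & Hn).
    assert (Hs1 : below y s1) by now exists n.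
    assert (Hs : below y s) by (apply (below_trans s s1 y); [now apply below_step | exact Hs1]).
    destruct (iso_total _ _ _ HF s1 Hs1) as [t1 Ht1].
    assert (Gt1 := IH _ _ Ht1 Hn).
    destruct (iso_total _ _ _ HG s Hs) as [t' Ht'].
    destruct (classic (t = t')) as [<- | Hne]; [exact Ht'|].
    destruct Hcp as (_ & _ & _ & _ & _ & Hb & _). exfalso.
    apply (Hb t1 t t' Hne).
    + exact (proj1 (iso_pres _ _ _ HF _ _ _ _ Hst Ht1) Rss1).
    + exact (proj1 (iso_pres _ _ _ HG _ _ _ _ Ht' Gt1) Rss1).
    + rewrite <- (restr_iso_sub F y z s t CF HF Hs Hst).
      exact (restr_iso_sub G y z s t' CG HG Hs Ht').
Qed.

Lemma sibling_restr_iso_eq w w' y : rR w y -> rR w' y -> restr_iso w w' -> w = w'.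
Proof.
  intros Rw Rw' Hww'; destruct (classic (w = w')) as [| Hne]; [assumption|].
  destruct Hcp as (_ & _ & _ & _ & _ & Hb & _); exfalso; exact (Hb y w w' Hne Rw Rw' Hww').
Qed.

(* The graph of the unique isomorphism of [u1] onto [w1] (see [iso_rigid]); quantifying over all of
   them makes it definable without choosing one. *)
Definition canon (u1 w1 u v : M) : Prop :=
  restr_iso u1 w1 /\ forall H, C H -> iso H u1 w1 -> crel H u v.

Lemma canon_iff H u1 w1 u v : C H -> iso H u1 w1 -> (canon u1 w1 u v <-> crel H u v).
Proof.
  intros CH HH; split; [intros [_ Hc]; exact (Hc H CH HH)|].
  intro Huv; split; [now exists H|]; intros G CG HG; exact (iso_rigid H G u1 w1 CH CG HH HG u v Huv).
Qed.

Lemma canon_sym u1 w1 u v : canon u1 w1 u v -> canon w1 u1 v u.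
Proof.
  intros [Hi Hc]; split; [now symmetry|].
  intros H CH HH; assert (Hinv := Hc _ (C_inv_rel H CH) (iso_inv _ _ _ HH)).
  unfold inv_rel in Hinv; now rewrite crel_rel_class in Hinv.
Qed.

Lemma canon_dom u1 w1 u v : canon u1 w1 u v -> below u1 u /\ below w1 v.
Proof.
  intros Hc; destruct (proj1 Hc) as (H & CH & HH).
  exact (iso_dom H u1 w1 HH u v (proj1 (canon_iff H u1 w1 u v CH HH) Hc)).
Qed.

Definition fcanon r i j k l := FAnd (frestr r i j) (FAllC (FImp (fiso (S r) 0 i j) (fcrel 0 k l))).

Lemma sat_fcanon e E r i j k l : E r = R ->
  (sat e E (fcanon r i j k l) <-> canon (e i) (e j) (e k) (e l)).
Proof.
  intro ER; unfold fcanon, canon; cbn [Defs.sat]; rewrite sat_frestr by exact ER.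
  setoid_rewrite sat_FImp; setoid_rewrite sat_fcrel; cbn [scons].
  split; intros [Hi Hc]; split; auto; intros H CH HH; apply (Hc H CH);
    [apply (sat_fiso e (scons H E) (S r) 0 i j ER) | apply (sat_fiso e (scons H E) (S r) 0 i j ER)]; auto.
Qed.

Definition glue (x y u v : M) : Prop :=
  (u = x /\ v = y) \/ exists u1 w1, rR u1 x /\ rR w1 y /\ canon u1 w1 u v.

Lemma C_glue x y : C (rel_class (glue x y)).
Proof.
  apply (C_rel_class (FOr (FAnd (FEq 1 3) (FEq 0 4))
      (FExS (FExS (FAnd (fcrel 0 1 5) (FAnd (fcrel 0 0 6) (fcanon 0 1 0 3 2))))))
    (scons x (fun _ => y)) (fun _ => R)); [intros; apply C_R|].
  intros p u v; unfold glue; satsimp.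
  setoid_rewrite (fun e => sat_fcanon e (fun _ => R) 0 1 0 3 2 eq_refl); reflexivity.
Qed.

Lemma glue_swap x y u v : glue x y u v -> glue y x v u.
Proof.
  intros [[-> ->] | (u1 & w1 & Ru1 & Rw1 & Hc)]; [now left|].
  right; exists w1, u1; auto using canon_sym.
Qed.

Lemma glue_dom x y u v : glue x y u v -> below x u /\ below y v.
Proof.
  intros [[-> ->] | (u1 & w1 & Ru1 & Rw1 & Hc)]; [split; apply below_refl|].
  destruct (canon_dom _ _ _ _ Hc) as [Hu Hv]; split.
  - apply (below_trans u u1 x); [exact Hu | now apply below_step].
  - apply (below_trans v w1 y); [exact Hv | now apply below_step].
Qed.

Lemma glue_child_root x y u v : rR u x -> glue x y u v -> rR v y.
Proof.
  intros Rux [[-> _] | (u1 & w1 & Ru1 & Rw1 & Hc)].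
  { exfalso; exact (below_acyclic x x (below_refl x) Rux). }
  assert (Hc' := Hc); destruct Hc' as [(H & CH & HH) _].
  assert (u1 = u) as <- by (apply (below_children_disjoint u1 u x u); auto;
    [apply (canon_dom _ _ _ _ Hc) | apply below_refl]).
  apply (canon_iff H u1 w1 u1 v CH HH) in Hc.
  now rewrite (iso_functional _ _ _ HH _ _ _ Hc (iso_root _ _ _ HH)).
Qed.

Lemma glue_functional x y u v v' : glue x y u v -> glue x y u v' -> v = v'.
Proof.
  intros [[-> ->] | (u1 & w1 & Ru1 & Rw1 & Hc)] [[Eu ->] | (u1' & w1' & Ru1' & Rw1' & Hc')];
    try reflexivity; try subst u.
  - exfalso; exact (below_acyclic u1' x (proj1 (canon_dom _ _ _ _ Hc')) Ru1').
  - exfalso; exact (below_acyclic u1 x (proj1 (canon_dom _ _ _ _ Hc)) Ru1).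
  - assert (u1' = u1) as <-.
    { apply (below_children_disjoint u1' u1 x u); auto;
        [apply (canon_dom _ _ _ _ Hc') | apply (canon_dom _ _ _ _ Hc)]. }
    assert (w1' = w1) as <-.
    { apply (sibling_restr_iso_eq w1' w1 y); auto.
      now rewrite <- (proj1 Hc'), (proj1 Hc). }
    destruct (proj1 Hc) as (H & CH & HH).
    apply (canon_iff H u1' w1' u v CH HH) in Hc; apply (canon_iff H u1' w1' u v' CH HH) in Hc'.
    exact (iso_functional _ _ _ HH _ _ _ Hc Hc').
Qed.

Lemma glue_total x y u :
  (forall c, rR c x -> exists w, rR w y /\ restr_iso c w) ->
  below x u -> exists v, glue x y u v.
Proof.
  intros Hcorr Hu; destruct (below_inv x u Hu) as [-> | (c & Rcx & Hcu)]; [exists y; now left|].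
  destruct (Hcorr c Rcx) as (w & Rwy & Hcw); destruct Hcw as (H & CH & HH).
  destruct (iso_total _ _ _ HH u Hcu) as [v Hv]; exists v; right; exists c, w.
  split; [exact Rcx | split; [exact Rwy |]]; now apply (canon_iff H c w u v CH HH).
Qed.

Lemma glue_pres x y u u' v v' : glue x y u v -> glue x y u' v' -> rR u u' -> rR v v'.
Proof.
  intros Guv Gu'v' Ruu'.
  destruct Guv as [[-> ->] | (u1 & w1 & Ru1 & Rw1 & Hc)].
  { exfalso; exact (below_acyclic x u' (proj1 (glue_dom _ _ _ _ Gu'v')) Ruu'). }
  destruct Gu'v' as [[-> ->] | (u1' & w1' & Ru1' & Rw1' & Hc')].
  { apply (glue_child_root x y u v Ruu'); right; eauto. }
  assert (u1' = u1) as <-.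
  { apply (below_children_disjoint u1' u1 x u); auto; [|apply (canon_dom _ _ _ _ Hc)].
    apply (below_trans u u' u1'); [now apply below_step | apply (canon_dom _ _ _ _ Hc')]. }
  assert (w1' = w1) as <-.
  { apply (sibling_restr_iso_eq w1' w1 y); auto. now rewrite <- (proj1 Hc'), (proj1 Hc). }
  destruct (proj1 Hc) as (H & CH & HH).
  apply (canon_iff H u1' w1' u v CH HH) in Hc; apply (canon_iff H u1' w1' u' v' CH HH) in Hc'.
  exact (proj1 (iso_pres _ _ _ HH _ _ _ _ Hc Hc') Ruu').
Qed.

Lemma restr_iso_of_children x y :
  (forall u, rR u x -> exists w, rR w y /\ restr_iso u w) ->
  (forall w, rR w y -> exists u, rR u x /\ restr_iso w u) ->
  restr_iso x y.
Proof.
  intros Hxy Hyx; exists (rel_class (glue x y)); split; [apply C_glue|].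
  unfold iso; setoid_rewrite crel_rel_class; split; [|split; [|split]].
  - apply glue_dom.
  - intros u Hu; destruct (glue_total x y u Hxy Hu) as [v Hv]; exists v; split; [exact Hv|].
    intros v' Hv'; exact (glue_functional x y u v' v Hv' Hv).
  - intros v Hv; destruct (glue_total y x v Hyx Hv) as [u Hu].
    exists u; split; [now apply glue_swap|].
    intros u' Hu'; exact (glue_functional y x v u' u (glue_swap _ _ _ _ Hu') Hu).
  - intros u u' v v' Huv Hu'v'; split; [now apply (glue_pres x y)|].
    apply (glue_pres y x); now apply glue_swap.
Qed.

(** * The quotient *)

Section Quotient.
Variable W : M -> Prop.

Notation cls := (Defs.cls M mem C M0 R).
Notation is_rep := (Defs.is_rep M mem C M0 R W).
Notation tM0 := (tM0 mem C M0 R W).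
Notation tR := (tR mem C M0 R W).

Lemma tR_lift u x s : tR u x -> restr_iso x s -> exists t, rR t s /\ restr_iso u t.
Proof.
  intros (b & c & _ & _ & [[_ Hub] _] & [[_ Hxc] _] & b0 & c0 & [_ Hb0b] & [_ Hc0c] & Rbc) Hxs.
  destruct (restr_iso_child c0 s b0) as (t & Rts & Hb0t); [|exact Rbc|].
  - now rewrite Hc0c, <- Hxc.
  - exists t; split; [exact Rts|]. now rewrite Hub, <- Hb0b.
Qed.

Lemma quotient_acc s x : restr_iso x s ->
  Acc (fun u v => tM0 u /\ tM0 v /\ tR u v) x.
Proof.
  revert x; induction s as [s IH] using (well_founded_ind R_wf); intros x Hxs.
  constructor; intros u (_ & _ & Hux).
  destruct (tR_lift u x s Hux Hxs) as (t & Rts & Hut); exact (IH t Rts u Hut).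
Qed.

Lemma quotient_wf : wf_on tM0 tR.
Proof. intro x; apply (quotient_acc x x); reflexivity. Qed.

Hypothesis HW : global_wo mem C W.

Lemma C_cls b : C (cls b).
Proof.
  apply (C_of_sat (FAnd (FIn 0 1) (frestr 0 0 1)) (fun _ => b) (scons R (fun _ => M0))).
  - intros [|k]; [apply C_R | apply C_M0].
  - intro x; cbn [Defs.sat]; now rewrite (sat_frestr _ (scons R (fun _ => M0)) 0 0 1 eq_refl).
Qed.

Lemma rep_exists b : M0 b -> exists r, is_rep b r.
Proof.
  intro Mb; destruct HW as (_ & _ & _ & Htri & Hwf).
  destruct (Hwf (cls b) (C_cls b)) as (r & Hr & Hmin); [exists b; split; [exact Mb | reflexivity]|].
  exists r; split; [exact Hr|]; intros r' Hr'.
  destruct (Htri r' r) as [H | [H | H]]; auto; exfalso; exact (Hmin r' Hr' H).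
Qed.

Lemma rep_eq_of_restr_iso b c x y : is_rep b x -> is_rep c y -> restr_iso x y -> x = y.
Proof.
  intros [[Mx Hx] Hxmin] [[My Hy] Hymin] Hxy.
  destruct (Hxmin y) as [-> | Wxy]; [split; [exact My | now rewrite <- Hxy] | reflexivity |].
  destruct (Hymin x) as [-> | Wyx]; [split; [exact Mx | now rewrite Hxy] | reflexivity |].
  destruct HW as (_ & Hirr & Htr & _); exfalso; exact (Hirr x (Htr _ _ _ Wxy Wyx)).
Qed.

Lemma tR_rep_of_child u x : tM0 x -> rR u x -> exists u', tM0 u' /\ tR u' x /\ restr_iso u u'.
Proof.
  intros (bx & Mbx & Hx) Rux; destruct (rR_M0 _ _ Rux) as [Mu _].
  destruct (rep_exists u Mu) as [u' Hu']; exists u'; split; [exists u; auto|].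
  split; [|symmetry; apply Hu'].
  exists u, bx; do 4 (split; auto); exists u, x.
  split; [split; [exact Mu | reflexivity]|]; split; [apply Hx | exact Rux].
Qed.

Lemma children_correspond x y : tM0 x ->
  (forall v, tM0 v -> tR v x -> tR v y) ->
  forall u, rR u x -> exists w, rR w y /\ restr_iso u w.
Proof.
  intros Tx Hxy u Rux; destruct (tR_rep_of_child u x Tx Rux) as (u' & Tu' & Hu'x & Huu').
  destruct (tR_lift u' y y (Hxy u' Tu' Hu'x) (reflexivity y)) as (w & Rwy & Hu'w).
  exists w; split; [exact Rwy | now rewrite Huu'].
Qed.

Lemma quotient_extensional : extensional tM0 tR.
Proof.
  intros x y Tx Ty Hxy; destruct (Tx) as (b & _ & Hx), (Ty) as (c & _ & Hy).
  apply (rep_eq_of_restr_iso b c x y Hx Hy), restr_iso_of_children.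
  - apply children_correspond; [exact Tx | intros v Tv; apply (Hxy v Tv)].
  - apply children_correspond; [exact Ty | intros v Tv; apply (Hxy v Tv)].
Qed.

End Quotient.
End CodingPair.
End SetTheory.
End Model.

Theorem lemma6 (M : Type) (mem : M -> M -> Prop) (C : (M -> Prop) -> Prop)
  (W : M -> Prop) (M0 : M -> Prop) (a : M) (R : M -> Prop) :
  MKstar mem C -> beta_model mem C -> global_wo mem C W ->
  coding_pair mem C M0 a R ->
  extensional (tM0 mem C M0 R W) (tR mem C M0 R W) /\
  wf_on (tM0 mem C M0 R W) (tR mem C M0 R W).
Proof.
  intros HMK Hbeta HW Hcp.
  destruct HMK as (Hext & _ & _ & Hupair & _ & _ & _ & _ & _ & Hcompr & _).
  assert (R_wf : well_founded (crel M mem R)).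
  { destruct Hcp as (_ & _ & CR & _ & _ & _ & _ & R_model_wf); exact (proj1 (Hbeta R CR) R_model_wf). }
  split.
  - exact (quotient_extensional M mem C Hext Hupair Hcompr M0 a R Hcp R_wf W HW).
  - exact (quotient_wf M mem C Hext Hupair Hcompr M0 a R Hcp R_wf W).
Qed.
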